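(* Let $d\ge 7$ be odd and let ${\rm F}_d\subset\mathbb{P}^3(\mathbb{C})$ be the Fermat surface $x^d-y^d-z^d+w^d=0$. Then the maximal number of pairwise disjoint lines contained in ${\rm F}_d$ equals $3d$. *)

From HB Require Import structures.
From mathcomp Require Import all_boot all_order all_algebra.
From mathcomp Require Import reals complex.
Set Implicit Arguments. Unset Strict Implicit. Unset Printing Implicit Defensive.
Import Order.TTheory GRing.Theory Num.Theory.
Local Open Scope ring_scope.

(* Homogeneous coordinates (x,y,z,w) of a point of P^3 are a nonzero row
   vector u : 'rV_4, with x = u 0 0, y = u 0 1, z = u 0 2, w = u 0 3. *)
Definition fermat_form (K : fieldType) (d : nat) (u : 'rV[K]_4) : K :=
  u 0 0 ^+ d - u 0 1 ^+ d - u 0 2 ^+ d + u 0 3 ^+ d.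

(* A line of P^3(K) is a 2-dimensional subspace of K^4, given as the row
   space of a 2x4 matrix of rank 2. *)
Definition is_line (K : fieldType) (L : 'M[K]_(2, 4)) : bool := \rank L == 2%N.

Definition line_in_fermat (K : fieldType) (d : nat) (L : 'M[K]_(2, 4)) : Prop :=
  is_line L /\ forall u : 'rV[K]_4, (u <= L)%MS -> fermat_form d u = 0.

Definition disjoint_lines (K : fieldType) (L1 L2 : 'M[K]_(2, 4)) : bool :=
  \rank (L1 :&: L2)%MS == 0%N.

Definition disjoint_fermat_lines (K : fieldType) (d n : nat)
    (Ls : 'I_n -> 'M[K]_(2, 4)) : Prop :=
  (forall i, line_in_fermat d (Ls i)) /\
  (forall i j, i != j -> disjoint_lines (Ls i) (Ls j)).

From HB Require Import structures.
From mathcomp Require Import all_boot all_order all_algebra.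
From mathcomp Require Import reals complex.
From mathcomp Require Import separable cyclic cyclotomic.
From mathcomp Require Import zify ring.
Set Implicit Arguments. Unset Strict Implicit. Unset Printing Implicit Defensive.
Import Order.TTheory GRing.Theory Num.Theory.
Local Open Scope ring_scope.

(* A line L on F_d has two coordinates x_a, x_b with nonzero
   Plücker coordinate [minor2 L a b]; parametrising L by (x_a, x_b) = (x, 1), the
   Fermat form restricts to a polynomial identity in x whose coefficients of
   degrees 0, 1, d - 2, d - 1 and d force L to be cut out by x_c = λ x_a and
   x_e = μ x_b, where {c, e} are the two remaining coordinates in some order.
   Whichever of these equations involves x_0 yields a point r e_0 + e_j of L with j <> 0 and
   r^d = -ε_j, ε_j being the signs of the Fermat form.  Disjoint lines contain
   distinct such points, and there are only 3d of them.

   For d odd and θ a primitive d-th root of unity, the lines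
     x = θ^p y, w = θ^q z;    x = θ^p z, w = θ^q y;    x = -θ^p w, y = -θ^q z
   lie on F_d.  Two lines of one family are disjoint when both exponents differ
   mod d, and two lines of different families are disjoint unless one linear
   congruence mod d between their four exponents holds.  Exponents satisfying all
   these conditions are given by two arithmetic families, for d = 3 mod 4, d >= 11
   and for d = 1 mod 4, d >= 25, and by tables for d = 7, 9, 13, 17, 21. *)

Lemma ord2P (i : 'I_2) : i = 0 \/ i = 1.
Proof. by case: i => [[|[|i]] Hi] //; [left|right]; apply: val_inj. Qed.

Lemma ord4P (j : 'I_4) : [\/ j = 0, j = 1, j = 2 | j = 3].
Proof.
by case: j => [[|[|[|[|j]]]] Hj] //; [constructor 1|constructor 2|constructor 3|constructor 4];
  apply: val_inj.
Qed.

Lemma ord4_perm (a b c e : 'I_4) :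
  uniq [:: a; b; c; e] -> perm_eq [:: a; b; c; e] (enum 'I_4).
Proof.
move=> u; apply: uniq_perm; rewrite ?enum_uniq //.
by apply: (uniq_min_size u _ _).2 => [x|]; rewrite ?mem_enum ?size_enum_ord.
Qed.

Lemma ord4_cover (a b c e k : 'I_4) :
  uniq [:: a; b; c; e] -> (k \in [:: a; c]) || (k \in [:: b; e]).
Proof.
move=> abce; have : k \in [:: a; b; c; e] by rewrite (perm_mem (ord4_perm abce)) mem_enum.
by rewrite !inE => /or4P[] ->; rewrite ?orbT.
Qed.

Lemma ord4_complete (a b : 'I_4) :
  a != b -> exists c e : 'I_4, uniq [:: a; b; c; e].
Proof.
by case: (ord4P a) => ->; case: (ord4P b) => -> // _; first
  [by exists 0, 1 | by exists 0, 2 | by exists 0, 3 | by exists 1, 2 | by exists 1, 3 | by exists 2, 3].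
Qed.

(** * Lines on F_d meet one of 3d points *)

Section Coordinates.
Variable K : fieldType.

Definition fermat_sign (j : 'I_4) : K := if (j == 0) || (j == 3) then 1 else -1.

Lemma fermat_sign_neq0 j : fermat_sign j != 0.
Proof. by rewrite /fermat_sign; case: ifP; rewrite ?oppr_eq0 oner_eq0. Qed.

Lemma fermat_sign0 : fermat_sign 0 = 1.
Proof. by rewrite /fermat_sign eqxx. Qed.

Lemma fermat_sign_sqr j : fermat_sign j * fermat_sign j = 1.
Proof. by rewrite /fermat_sign; case: ifP; rewrite ?mulrNN mulr1. Qed.

Lemma fermat_signV j : (fermat_sign j)^-1 = fermat_sign j.
Proof. by rewrite /fermat_sign; case: ifP; rewrite ?invrN invr1. Qed.

Lemma sum_ord4_uniq (F : 'I_4 -> K) a b c e :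
  uniq [:: a; b; c; e] -> \sum_j F j = F a + F b + F c + F e.
Proof.
move/ord4_perm=> abce.
by rewrite -big_enum /= -(perm_big _ abce) !big_cons big_nil /=; ring.
Qed.

Lemma fermat_formE d (u : 'rV[K]_4) :
  fermat_form d u = \sum_(j < 4) fermat_sign j * u 0 j ^+ d.
Proof. by rewrite (@sum_ord4_uniq _ 0 1 2 3) // /fermat_sign /fermat_form /=; ring. Qed.

Definition pair_point (p q : 'I_4) (x : K) : 'rV[K]_4 :=
  \row_k (if k == p then 1 else if k == q then x else 0).

Lemma pair_point_of_support (u : 'rV[K]_4) p q r s :
    (forall k, (k \in [:: p; q]) || (k \in [:: r; s])) ->
  u 0 p = 1 -> u 0 r = 0 -> u 0 s = 0 -> u = pair_point p q (u 0 q).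
Proof.
move=> cover up ur us; apply/rowP => k; rewrite mxE.
case: eqVneq => [-> // | kp]; case: eqVneq => [-> // | kq].
by move: (cover k); rewrite !inE (negbTE kp) (negbTE kq) /= => /orP[]/eqP->.
Qed.

End Coordinates.

Arguments fermat_sign {K} j.

Section RowSpace.
Variable K : fieldType.

Lemma disjoint_linesP (L1 L2 : 'M[K]_(2, 4)) :
  reflect (forall u : 'rV_4, (u <= L1)%MS -> (u <= L2)%MS -> u = 0) (disjoint_lines L1 L2).
Proof.
rewrite /disjoint_lines mxrank_eq0; apply: (iffP eqP) => [cap0 u uL1 uL2 | cap0].
  by apply/eqP; rewrite -submx0 -cap0 sub_capmx uL1.
apply/eqP; rewrite -submx0; apply/row_subP => i; rewrite submx0; apply/eqP.
by apply: cap0; apply: submx_trans (row_sub i _) _; rewrite ?capmxSl ?capmxSr.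
Qed.

Definition minor2 (L : 'M[K]_(2, 4)) (a b : 'I_4) := L 0 a * L 1 b - L 0 b * L 1 a.

Lemma rank_le1_minor2 (L : 'M[K]_(2, 4)) :
  (forall a b, minor2 L a b = 0) -> (\rank L <= 1)%N.
Proof.
move=> L_minor0.
suff [c [r ->]] : exists (c : 'M[K]_(2, 1)) (r : 'rV[K]_4), L = c *m r.
  exact: leq_trans (mxrankM_maxl _ _) (rank_leq_col _).
have [a La | L0] := pickP (fun a => L 0 a != 0).
  exists (\col_i (L i a / L 0 a)), (row 0 L).
  apply/matrixP => i j; rewrite !mxE big_ord1 !mxE.
  have [->|->] := ord2P i.
    by rewrite divff // mul1r.
  have /eqP := L_minor0 a j; rewrite subr_eq0 /minor2 => /eqP E.
  by rewrite mulrAC (mulrC (L 1 a)) -E (mulrC (L 0 a)) mulfK.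
exists (\col_i (i != 0)%:R), (row 1 L).
apply/matrixP => i j; rewrite !mxE big_ord1 !mxE.
have [->|->] := ord2P i.
  by rewrite mul0r; move/negbFE/eqP: (L0 j).
by rewrite mul1r.
Qed.

Lemma line_minor2_neq0 (L : 'M[K]_(2, 4)) :
  is_line L -> exists a b, minor2 L a b != 0.
Proof.
move=> /eqP L2.
have [/existsP[a /existsP[b ab]] | /existsPn all0] :=
  boolP [exists a, exists b, minor2 L a b != 0]; first by exists a, b.
suff : (\rank L <= 1)%N by rewrite L2.
apply: rank_le1_minor2 => a b; apply/eqP.
by have /existsPn/(_ b) := all0 a; rewrite negbK.
Qed.

Lemma minor2_adapted_basis (L : 'M[K]_(2, 4)) a b : minor2 L a b != 0 ->
  exists u v : 'rV[K]_4, [/\ (u <= L)%MS, (v <= L)%MS,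
    u 0 a = 1 /\ u 0 b = 0 & v 0 a = 0 /\ v 0 b = 1].
Proof.
move=> m_neq0; set m := minor2 L a b in m_neq0.
have rowL i : (row i L <= L)%MS by exact: row_sub.
exists ((L 1 b / m) *: row 0 L - (L 0 b / m) *: row 1 L).
exists ((L 0 a / m) *: row 1 L - (L 1 a / m) *: row 0 L).
rewrite !mxE /m /minor2; split; rewrite ?addmx_sub ?eqmx_opp ?scalemx_sub //;
  split; field; rewrite -/(minor2 L a b) //.
Qed.

Lemma sub_rows2P n (L : 'M[K]_(2, n)) (w : 'rV[K]_n) :
  reflect (exists a b, w = a *: row 0 L + b *: row 1 L) (w <= L)%MS.
Proof.
have row1E : lift ord0 ord0 = 1 :> 'I_2 by apply: val_inj.
apply: (iffP submxP) => [[D ->] | [a [b ->]]].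
  by exists (D 0 0), (D 0 1); rewrite mulmx_sum_row big_ord_recl big_ord1 row1E.
exists (\row_i (if i == 0 then a else b)).
by rewrite mulmx_sum_row big_ord_recl big_ord1 row1E !mxE.
Qed.

Definition span2 (u v : 'rV[K]_4) : 'M[K]_(2, 4) :=
  \matrix_(i, j) (if i == 0 then u 0 j else v 0 j).

Lemma span2_row0 (u v : 'rV[K]_4) c : span2 u v 0 c = u 0 c.
Proof. by rewrite mxE. Qed.

Lemma span2_row1 (u v : 'rV[K]_4) c : span2 u v 1 c = v 0 c.
Proof. by rewrite mxE. Qed.

Lemma sub_span2P (u v w : 'rV[K]_4) :
  reflect (exists a b, w = a *: u + b *: v) (w <= span2 u v)%MS.
Proof.
have [row0 row1] : row 0 (span2 u v) = u /\ row 1 (span2 u v) = v.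
  by split; apply/rowP => j; rewrite !mxE.
by apply: (equivP (sub_rows2P _ _)); rewrite row0 row1.
Qed.

Lemma line_of_unit_columns (L : 'M[K]_(2, 4)) c0 c1 :
  L 0 c0 = 1 -> L 1 c0 = 0 -> L 0 c1 = 0 -> L 1 c1 = 1 -> is_line L.
Proof.
move=> L00 L10 L01 L11; apply/row_freeP.
exists (\matrix_(j < 4, i < 2) (if i == 0 then (j == c0)%:R else (j == c1)%:R)).
apply/matrixP => i i'; rewrite !mxE.
have pick (c : 'I_4) : \sum_(j < 4) L i j * (j == c)%:R = L i c.
  rewrite (bigD1 c) //= eqxx mulr1 big1 ?addr0 // => j /negbTE->.
  by rewrite mulr0.
by case: (ord2P i') => -> /=; under eq_bigr do rewrite mxE /=; rewrite pick;
  case: (ord2P i) => ->.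
Qed.

End RowSpace.

Section PencilSplit.
Variables (K : idomainType) (m : nat) (A B al be ga de : K).
Hypotheses (A_neq0 : A != 0) (B_neq0 : B != 0).
Hypothesis top_neq0 : A * al ^+ m.+3 + B * ga ^+ m.+3 != 0.
Hypothesis bot_neq0 : A * be ^+ m.+3 + B * de ^+ m.+3 != 0.
Hypothesis coef1 : A * al * be ^+ m.+2 + B * ga * de ^+ m.+2 = 0.
Hypothesis coefd1 : A * al ^+ m.+2 * be + B * ga ^+ m.+2 * de = 0.
Hypothesis coefd2 : A * al ^+ m.+1 * be ^+ 2 + B * ga ^+ m.+1 * de ^+ 2 = 0.

Let mulr_exp_eq0 (x y z : K) n : x != 0 -> x * y * z ^+ n.+1 = 0 -> y = 0 \/ z = 0.
Proof.
move=> x_neq0 /eqP; rewrite !mulf_eq0 (negbTE x_neq0) expf_eq0 /=.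
by case/orP => /eqP; [left | right].
Qed.

Let exp0 n : (0 : K) ^+ n.+1 = 0. Proof. exact: expr0n. Qed.

Lemma pencil_split : (be = 0 /\ ga = 0) \/ (al = 0 /\ de = 0).
Proof.
have [al0 | al_neq0] := eqVneq al 0.
  right; split=> //; have [ga0 | //] : ga = 0 \/ de = 0.
    by apply: (mulr_exp_eq0 B_neq0); rewrite -coef1 al0 mulr0 mul0r add0r.
  by move: top_neq0; rewrite al0 ga0 !exp0 !mulr0 addr0 eqxx.
have [be0 | be_neq0] := eqVneq be 0.
  left; split=> //; have [// | de0] : ga = 0 \/ de = 0.
    have := coefd1; rewrite be0 mulr0 add0r mulrAC => /(mulr_exp_eq0 B_neq0).
    by case; [right | left].
  by move: bot_neq0; rewrite be0 de0 !exp0 !mulr0 addr0 eqxx.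
exfalso.
have ga_neq0 : ga != 0.
  apply: contra_eq_neq coef1 => ->; rewrite mulr0 mul0r addr0.
  by rewrite mulf_neq0 ?expf_neq0 // mulf_neq0.
have de_neq0 : de != 0.
  apply: contra_eq_neq coefd1 => ->; rewrite mulr0 addr0.
  by rewrite mulf_neq0 // mulf_neq0 ?expf_neq0.
set X := A * al ^+ m.+1; set Y := B * ga ^+ m.+1.
have eq1 : X * al * be + Y * ga * de = 0 by rewrite -coefd1 /X /Y !exprS; ring.
have eq2 : X * be * be + Y * de * de = 0 by rewrite -coefd2 /X /Y; ring.
(* (X, Y) <> 0 lies in the kernel of a matrix of determinant be de (al de - ga be) *)
have prop : ga * be = al * de.
  have : Y * de * (ga * be - al * de) = 0.
    transitivity (be * (X * al * be + Y * ga * de) - al * (X * be * be + Y * de * de)).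
      by ring.
    by rewrite eq1 eq2 !mulr0 subrr.
  move/eqP; rewrite !mulf_eq0 expf_eq0 (negbTE B_neq0) (negbTE ga_neq0).
  by rewrite (negbTE de_neq0) subr_eq0 => /eqP.
have : be * (A * al ^+ m.+3 + B * ga ^+ m.+3) = 0.
  transitivity (al * (X * al * be + Y * ga * de) + Y * ga * (ga * be - al * de)).
    by rewrite /X /Y !exprS; ring.
  by rewrite eq1 prop subrr !mulr0 addr0.
by move/eqP; rewrite mulf_eq0 (negbTE be_neq0) (negbTE top_neq0).
Qed.
End PencilSplit.

Section PencilCoef.
Variable K : numFieldType.

Lemma vanishing_sum_coef_eq0 n (c : nat -> K) :
  (forall x, \sum_(i < n) c i * x ^+ i = 0) -> forall i, (i < n)%N -> c i = 0.
Proof.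
move=> c_vanish i lt_in; pose p := \poly_(i < n) c i.
suff p0 : p = 0 by have := congr1 (fun q : {poly K} => q`_i) p0; rewrite coef_poly lt_in coef0.
apply/eqP; apply/contraT => p_neq0.
have roots_p : all (root p) [seq k%:R | k <- iota 0 (size p)].
  by apply/allP => _ /mapP[k _ ->]; rewrite /root horner_poly c_vanish.
have uniq_roots : uniq [seq k%:R : K | k <- iota 0 (size p)].
  by rewrite map_inj_uniq ?iota_uniq // => k1 k2 /eqP; rewrite eqr_nat => /eqP.
by have := max_poly_roots p_neq0 roots_p uniq_roots; rewrite size_map size_iota ltnn.
Qed.

Lemma exprD_linear (a b x : K) d :
  (a * x + b) ^+ d = \sum_(i < d.+1) (a ^+ i * b ^+ (d - i)) *+ 'C(d, i) * x ^+ i.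
Proof.
rewrite addrC exprDn; apply: eq_bigr => i _.
by rewrite exprMn -mulrnAl -mulrnAr mulrA [_ * a ^+ i]mulrC.
Qed.

Variables (d : nat) (ea eb ec ee al be ga de : K).
Hypothesis d_gt0 : (0 < d)%N.

Let pencil_coef i :=
  (ec * al ^+ i * be ^+ (d - i) + ee * ga ^+ i * de ^+ (d - i)) *+ 'C(d, i)
  + (i == d)%:R * ea + (i == 0)%:R * eb.

Let pencil_expand x :
  ea * x ^+ d + eb + ec * (al * x + be) ^+ d + ee * (ga * x + de) ^+ d =
  \sum_(i < d.+1) pencil_coef i * x ^+ i.
Proof.
have top : \sum_(i < d.+1) ((i : nat) == d)%:R * ea * x ^+ i = ea * x ^+ d.
  rewrite big_ord_recr /= eqxx mul1r big1 ?add0r // => i _.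
  by rewrite (ltn_eqF (ltn_ord i)) !mul0r.
have bot : \sum_(i < d.+1) ((i : nat) == 0)%:R * eb * x ^+ i = eb.
  by rewrite big_ord_recl /= mul1r mulr1 big1 ?addr0 // => i _; rewrite !mul0r.
have mid : ec * (al * x + be) ^+ d + ee * (ga * x + de) ^+ d =
    \sum_(i < d.+1) (ec * al ^+ i * be ^+ (d - i) + ee * ga ^+ i * de ^+ (d - i))
                     *+ 'C(d, i) * x ^+ i.
  rewrite !exprD_linear !mulr_sumr -big_split /=; apply: eq_bigr => i _.
  by rewrite !mulrnAl !mulrnAr -mulrnDl; congr (_ *+ _); ring.
rewrite /pencil_coef; under eq_bigr do rewrite !mulrDl.
by rewrite !big_split /= top bot -mid; ring.
Qed.

Lemma pencil_coef_eq0 :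
    (forall x, ea * x ^+ d + eb + ec * (al * x + be) ^+ d + ee * (ga * x + de) ^+ d = 0) ->
  [/\ ea + ec * al ^+ d + ee * ga ^+ d = 0, eb + ec * be ^+ d + ee * de ^+ d = 0 &
      forall i, (0 < i < d)%N -> ec * al ^+ i * be ^+ (d - i) + ee * ga ^+ i * de ^+ (d - i) = 0].
Proof.
move=> f0; have coef0 i : (i <= d)%N -> pencil_coef i = 0.
  by move=> le_id; apply: (vanishing_sum_coef_eq0 (n := d.+1)) => // x; rewrite -pencil_expand.
split.
- have := coef0 d (leqnn d).
  by rewrite /pencil_coef subnn !expr0 !mulr1 binn eqxx gtn_eqF // mul1r mul0r addr0 => <-; ring.
- have := coef0 0 (leq0n d).
  by rewrite /pencil_coef subn0 !expr0 !mulr1 bin0 ltn_eqF // mul1r mul0r => <-; ring.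
move=> i /andP[i_gt0 lt_id]; have /eqP := coef0 i (ltnW lt_id).
rewrite /pencil_coef ltn_eqF // gtn_eqF // !mul0r !addr0 mulrn_eq0 eqn0Ngt bin_gt0.
by rewrite (ltnW lt_id) => /eqP.
Qed.

End PencilCoef.

Lemma card_roots_lt (K : idomainType) (I : finType) (A : {pred I}) (f : I -> K)
    (p : {poly K}) :
  p != 0 -> {in A &, injective f} -> {in A, forall i, root p (f i)} -> (#|A| < size p)%N.
Proof.
move=> p_neq0 f_inj f_root; rewrite cardE -(size_map f).
apply: max_poly_roots p_neq0 _ _.
  by apply/allP => _ /mapP[i iA ->]; apply: f_root; rewrite -mem_enum.
by rewrite map_inj_in_uniq ?enum_uniq // => i i'; rewrite !mem_enum; apply: f_inj.
Qed.

Section FermatLines.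
Variables (K : numFieldType) (m : nat).
Local Notation d := m.+3.

Lemma pencil_vanish_split (ea eb ec ee al be ga de : K) :
    ea != 0 -> eb != 0 -> ec != 0 -> ee != 0 ->
    (forall x, ea * x ^+ d + eb + ec * (al * x + be) ^+ d + ee * (ga * x + de) ^+ d = 0) ->
  (be = 0 /\ ga = 0 /\ ea + ec * al ^+ d = 0 /\ eb + ee * de ^+ d = 0) \/
  (al = 0 /\ de = 0 /\ ea + ee * ga ^+ d = 0 /\ eb + ec * be ^+ d = 0).
Proof.
move=> ea0 eb0 ec0 ee0 /(pencil_coef_eq0 (ltn0Sn _))[top bot mid].
have sum_neq0 (x y z : K) : x != 0 -> x + y + z = 0 -> y + z != 0.
  by move=> x0; rewrite -addrA => /eqP; rewrite addr_eq0 => /eqP x_eq; rewrite -oppr_eq0 -x_eq.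
have coef1 := mid 1%N isT; rewrite expr1 subn1 /= in coef1.
have coefd1 := mid m.+2 (leqnn _); rewrite subSnn expr1 in coefd1.
have coefd2 := mid m.+1 (ltnW (leqnn _)).
rewrite (_ : (m.+3 - m.+1 = 2)%N) in coefd2; last by lia.
have [[be0 ga0] | [al0 de0]] :=
  pencil_split ec0 ee0 (sum_neq0 _ _ _ ea0 top) (sum_neq0 _ _ _ eb0 bot) coef1 coefd1 coefd2.
- left; do !split=> //; [move: top | move: bot];
    by rewrite ?be0 ?ga0 expr0n /= mulr0 ?addr0 ?add0r.
- right; do !split=> //; [move: top | move: bot];
    by rewrite ?al0 ?de0 expr0n /= mulr0 ?addr0 ?add0r // => ->; rewrite addrC.
Qed.

Lemma pair_point_base (L : 'M[K]_(2, 4)) p q x :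
    (pair_point p q x <= L)%MS -> fermat_sign p + fermat_sign q * x ^+ d = 0 ->
    p != q -> 0 \in [:: p; q] ->
  exists j r, [/\ j != 0, fermat_sign j + r ^+ d = 0 & (pair_point j 0 r <= L)%MS].
Proof.
move=> pL pq_eq0 p_neq_q; rewrite !inE => /orP[/eqP p0 | /eqP q0]; last first.
  by subst q; exists p, x; rewrite fermat_sign0 mul1r in pq_eq0.
subst p; move/eqP: pq_eq0; rewrite fermat_sign0 addrC addr_eq0 => /eqP sq_x.
have xd : x ^+ d = - fermat_sign q.
  by rewrite -[LHS]mul1r -(fermat_sign_sqr K q) -mulrA sq_x mulrN1.
have x_neq0 : x != 0.
  by apply: contra_eq_neq xd => ->; rewrite expr0n eq_sym oppr_eq0 (fermat_sign_neq0 K q).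
exists q, x^-1; split; rewrite 1?eq_sym //.
  by rewrite exprVn xd invrN fermat_signV subrr.
suff -> : pair_point q 0 x^-1 = x^-1 *: pair_point 0 q x by exact: scalemx_sub.
apply/rowP => k; rewrite !mxE; have [->|kq] := eqVneq k q.
  by rewrite (eq_sym q 0) (negbTE p_neq_q) mulVf.
by case: eqVneq; rewrite ?mulr1 ?mulr0 ?(negbTE kq).
Qed.

Lemma fermat_line_base_point (L : 'M[K]_(2, 4)) : line_in_fermat d L ->
  exists j r, [/\ j != 0, fermat_sign j + r ^+ d = 0 & (pair_point j 0 r <= L)%MS].
Proof.
case=> /line_minor2_neq0[a [b ab]] LF.
have a_neq_b : a != b by apply: contraNneq ab => ->; rewrite /minor2 subrr.
have [c [e abce]] := ord4_complete a_neq_b.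
have [u [v [uL vL [ua ub] [va vb]]]] := minor2_adapted_basis ab.
have pencil c' e' x : uniq [:: a; b; c'; e'] ->
    fermat_sign a * x ^+ d + fermat_sign b + fermat_sign c' * (u 0 c' * x + v 0 c') ^+ d
      + fermat_sign e' * (u 0 e' * x + v 0 e') ^+ d = 0.
  move=> abce'; rewrite -(LF (x *: u + v)) ?addmx_sub ?scalemx_sub //.
  rewrite fermat_formE (sum_ord4_uniq _ abce') !mxE ua ub va vb.
  by rewrite mulr1 addr0 mulr0 add0r expr1n mulr1 !(mulrC x).
wlog [vc0 [ue0 [ac_eq be_eq]]] : c e abce / v 0 c = 0 /\ u 0 e = 0 /\
    fermat_sign a + fermat_sign c * u 0 c ^+ d = 0 /\
    fermat_sign b + fermat_sign e * v 0 e ^+ d = 0.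
  move=> W; have sign_neq0 := fermat_sign_neq0 K.
  (* the second alternative is the first one with c and e exchanged *)
  have [|[uc0 [ve0 [ae_eq bc_eq]]]] := pencil_vanish_split (sign_neq0 a) (sign_neq0 b)
    (sign_neq0 c) (sign_neq0 e) (fun x => pencil c e x abce); first exact: W.
  apply: (W e c) => //; rewrite (perm_uniq (_ : perm_eq _ [:: a; b; c; e])) //.
  by rewrite !perm_cons; apply/permP => P /=; rewrite addnCA.
have cover k := ord4_cover k abce.
have cover' k : (k \in [:: b; e]) || (k \in [:: a; c]) by rewrite orbC.
rewrite (pair_point_of_support cover ua ub ue0) in uL.
rewrite (pair_point_of_support cover' vb va vc0) in vL.
have [ac be] : a != c /\ b != e.
  by move: abce; rewrite /= !inE !negb_or => /and4P[/and3P[_ -> _] /andP[_ ->] _ _].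
case/orP: (cover 0) => z.
- exact: pair_point_base uL ac_eq ac z.
- exact: pair_point_base vL be_eq be z.
Qed.

Lemma disjoint_fermat_lines_le n (Ls : 'I_n -> 'M[K]_(2, 4)) :
  disjoint_fermat_lines d Ls -> (n <= 3 * d)%N.
Proof.
case=> Ls_on Ls_disj.
have [j /fin_all_exists[r base]] := fin_all_exists (fun i => fermat_line_base_point (Ls_on i)).
have base_inj i i' : j i = j i' -> r i = r i' -> i = i'.
  move=> jE rE; apply/eqP; apply: contraT => ii'.
  have [j_neq0 _ sub_i] := base i; have [_ _] := base i'; rewrite -jE -rE => sub_i'.
  have := disjoint_linesP _ _ (Ls_disj i i' ii') _ sub_i sub_i'.
  by move/rowP/(_ (j i)); rewrite !mxE eqxx => /eqP; rewrite oner_eq0.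
have card_class k : (#|[pred i | j i == k]| <= (k != 0%R) * d)%N.
  have [-> | k_neq0] := eqVneq k 0.
    by rewrite leqn0; apply/eqP/eq_card0 => i; rewrite inE; have [/negbTE] := base i.
  rewrite mul1n -ltnS -(@size_XnaddC _ d (fermat_sign k : K)) //.
  apply: card_roots_lt => [|i i'|i]; rewrite ?inE.
  - by rewrite -size_poly_eq0 size_XnaddC.
  - by move=> /eqP ji /eqP ji'; apply: base_inj; rewrite ji ji'.
  - move=> /eqP <-; have [_ ri _] := base i.
    by rewrite /root !hornerE addrC ri.
have -> : n = (\sum_(k < 4) #|[pred i | j i == k]|)%N.
  rewrite -[n in LHS]card_ord -sum1_card (partition_big j predT) //=.
  by apply: eq_bigr => k _; rewrite sum1dep_card; apply: eq_card => i; rewrite !inE.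
apply: (@leq_trans (\sum_(k < 4) (k != 0%R) * d)%N); first by apply: leq_sum => k _; apply: card_class.
by rewrite !big_ord_recl big_ord0 /=; lia.
Qed.

End FermatLines.

(** * Three families of lines on F_d *)

Section PairingLines.
Variable K : fieldType.

(* The line x_0 = x x_j, x_s = y x_r. *)
Definition pairing_line (j r s : 'I_4) (x y : K) : 'M[K]_(2, 4) :=
  span2 (pair_point j 0 x) (pair_point r s y).

Variables (j r s : 'I_4).
Hypothesis uniq_0jrs : uniq [:: 0; j; r; s].

Lemma pairing_line_coords (x y a b : K) (w := a *: pair_point j 0 x + b *: pair_point r s y) :
  [/\ w 0 0 = a * x, w 0 j = a, w 0 r = b & w 0 s = b * y].
Proof.
move: uniq_0jrs; rewrite /= !inE !negb_or => /and4P[/and3P[j0 r0 s0] /andP[jr js] rs _].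
rewrite /w !mxE !eqxx (eq_sym r j) (eq_sym r 0) (eq_sym s j) (eq_sym s 0) (eq_sym s r).
by rewrite (negbTE j0) (negbTE r0) (negbTE s0) (negbTE jr) (negbTE js) (negbTE rs); split; ring.
Qed.

Lemma sub_pairing_line (x y : K) w : (w <= pairing_line j r s x y)%MS ->
  exists a b, [/\ w = a *: pair_point j 0 x + b *: pair_point r s y,
                  w 0 0 = a * x, w 0 j = a, w 0 r = b & w 0 s = b * y].
Proof.
move=> /sub_span2P[a [b wE]]; exists a, b.
by have [] := pairing_line_coords x y a b; rewrite -wE.
Qed.

Lemma pairing_line_on_fermat d (x y : K) :
    fermat_sign j + x ^+ d = 0 -> fermat_sign r + fermat_sign s * y ^+ d = 0 ->
  line_in_fermat d (pairing_line j r s x y).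
Proof.
move=> jx rsy; split.
  have [_ p1j p1r _] := pairing_line_coords x y 1 0.
  have [_ p2j p2r _] := pairing_line_coords x y 0 1.
  rewrite ?scale0r ?scale1r ?addr0 ?add0r in p1j p1r p2j p2r.
  by apply: (line_of_unit_columns (c0 := j) (c1 := r)); rewrite ?span2_row0 ?span2_row1.
move=> w /sub_pairing_line[a [b [_ w0 wj wr ws]]].
rewrite fermat_formE (sum_ord4_uniq _ uniq_0jrs) w0 wj wr ws fermat_sign0 !exprMn.
transitivity (a ^+ d * (fermat_sign j + x ^+ d) + b ^+ d * (fermat_sign r + fermat_sign s * y ^+ d)).
  by ring.
by rewrite jx rsy !mulr0 addr0.
Qed.

Lemma pairing_lines_disjoint (x y x' y' : K) :
  x != x' -> y != y' -> disjoint_lines (pairing_line j r s x y) (pairing_line j r s x' y').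
Proof.
move=> xx' yy'; apply/disjoint_linesP => w.
move=> /sub_pairing_line[a [b [wE w0 wj wr ws]]] /sub_pairing_line[a' [b' [_ w0' wj' wr' ws']]].
have a0 : a = 0.
  apply: (mulIf (_ : x - x' != 0)); first by rewrite subr_eq0.
  by rewrite mulrBr -w0 w0' -wj' wj subrr mul0r.
have b0 : b = 0.
  apply: (mulIf (_ : y - y' != 0)); first by rewrite subr_eq0.
  by rewrite mulrBr -ws ws' -wr' wr subrr mul0r.
by rewrite wE a0 b0 !scale0r addr0.
Qed.

End PairingLines.

Section CrossPairings.
Variable K : fieldType.

Lemma pairing_lines_disjoint_12 (z1 e1 z2 e2 : K) : z2 != 0 -> z1 * e1 != z2 * e2 ->
  disjoint_lines (pairing_line 1 2 3 z1 e1) (pairing_line 2 1 3 z2 e2).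
Proof.
move=> z2_neq0 ze; apply/disjoint_linesP => w /sub_pairing_line[//|a [b [-> w0 w1 w2 w3]]].
case/sub_pairing_line=> [//|a' [b' [_ v0 v2 v1 v3]]].
have E1 : a * z1 = b * z2 by rewrite -w0 v0 -v2 w2.
have E2 : a * e2 = b * e1 by rewrite -w3 v3 -v1 w1.
have a0 : a = 0.
  apply: (mulIf (_ : z1 * e1 - z2 * e2 != 0)); first by rewrite subr_eq0.
  by rewrite mul0r; transitivity (a * z1 * e1 - a * e2 * z2); [ring | rewrite E1 E2; ring].
have b0 : b = 0 by apply: (mulIf z2_neq0); rewrite -E1 a0 !mul0r.
by rewrite a0 b0 !scale0r addr0.
Qed.

Lemma pairing_lines_disjoint_13 (z1 e1 z3 e3 : K) : e3 * z1 != e1 * z3 ->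
  disjoint_lines (pairing_line 1 2 3 z1 e1) (pairing_line 3 2 1 z3 e3).
Proof.
move=> ze; apply/disjoint_linesP => w /sub_pairing_line[//|a [b [-> w0 w1 w2 w3]]].
case/sub_pairing_line=> [//|a' [b' [_ v0 v3 v2 v1]]].
have E1 : a = b * e3 by rewrite -w1 v1 -v2 w2.
have E2 : a * z1 = b * e1 * z3 by rewrite -w0 v0 -v3 w3.
have b0 : b = 0.
  apply: (mulIf (_ : e3 * z1 - e1 * z3 != 0)); first by rewrite subr_eq0.
  by rewrite mul0r; transitivity (b * e3 * z1 - b * e1 * z3); [ring | rewrite -E1 -E2 subrr].
by rewrite E1 b0 mul0r !scale0r addr0.
Qed.

Lemma pairing_lines_disjoint_23 (z2 e2 z3 e3 : K) : z2 != e2 * e3 * z3 ->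
  disjoint_lines (pairing_line 2 1 3 z2 e2) (pairing_line 3 2 1 z3 e3).
Proof.
move=> ze; apply/disjoint_linesP => w /sub_pairing_line[//|a [b [-> w0 w2 w1 w3]]].
case/sub_pairing_line=> [//|a' [b' [_ v0 v3 v2 v1]]].
have E1 : b = a * e3 by rewrite -w1 v1 -v2 w2.
have E2 : a * z2 = b * e2 * z3 by rewrite -w0 v0 -v3 w3.
have a0 : a = 0.
  apply: (mulIf (_ : z2 - e2 * e3 * z3 != 0)); first by rewrite subr_eq0.
  by rewrite mul0r; transitivity (a * z2 - a * e3 * e2 * z3); [ring | rewrite E2 -E1; ring].
by rewrite E1 a0 mul0r !scale0r addr0.
Qed.

End CrossPairings.

Section FermatFamilies.
Variables (K : fieldType) (d : nat) (theta : K).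
Hypotheses (d_odd : odd d) (theta_prim : d.-primitive_root theta).

Definition fermat_family (P Q : nat -> nat -> nat) (t a : nat) : 'M[K]_(2, 4) :=
  if t == 0 then pairing_line 1 2 3 (theta ^+ P 0 a) (theta ^+ Q 0 a)
  else if t == 1 then pairing_line 2 1 3 (theta ^+ P 1 a) (theta ^+ Q 1 a)
  else pairing_line 3 2 1 (- theta ^+ P 2 a) (- theta ^+ Q 2 a).

Definition disjoint_exponents (P Q : nat -> nat -> nat) :=
  [/\ (forall t a a', t < 3 -> a < d -> a' < d -> a != a' ->
         P t a != P t a' %[mod d] /\ Q t a != Q t a' %[mod d]),
      (forall a c, a < d -> c < d -> P 0 a + Q 0 a != P 1 c + Q 1 c %[mod d]),
      (forall a f, a < d -> f < d -> Q 0 a + P 2 f != Q 2 f + P 0 a %[mod d]) &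
      (forall c f, c < d -> f < d -> P 1 c != Q 1 c + P 2 f + Q 2 f %[mod d])]%N.

Lemma fermat_family_on_fermat P Q t a :
  (t < 3)%N -> line_in_fermat d (fermat_family P Q t a).
Proof.
move=> t_lt3.
have root1 k : (theta ^+ k) ^+ d = 1 by rewrite exprAC (prim_expr_order theta_prim) expr1n.
have rootN1 k : (- theta ^+ k) ^+ d = -1 by rewrite exprNn root1 mulr1 -signr_odd d_odd.
rewrite /fermat_family; case: ifP => _; last case: ifP => _.
- by apply: pairing_line_on_fermat; rewrite // root1 /fermat_sign /=; ring.
- by apply: pairing_line_on_fermat; rewrite // root1 /fermat_sign /=; ring.
- by apply: pairing_line_on_fermat; rewrite // rootN1 /fermat_sign /=; ring.
Qed.

Lemma fermat_family_disjoint P Q t a t' a' :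
    disjoint_exponents P Q -> (t < 3)%N -> (a < d)%N -> (t' < 3)%N -> (a' < d)%N ->
    (t, a) != (t', a') ->
  disjoint_lines (fermat_family P Q t a) (fermat_family P Q t' a').
Proof.
move=> [Pinj H01 H02 H12].
have expE := eq_prim_root_expr theta_prim.
have theta_neq0 k : theta ^+ k != 0.
  by rewrite expf_neq0 // (prim_root_eq0 theta_prim) -lt0n (prim_order_gt0 theta_prim).
wlog le_tt' : t a t' a' / (t <= t')%N.
  move=> W t3 ad t3' ad' neq; have [le | /ltnW le] := leqP t t'; first exact: W.
  by rewrite /disjoint_lines capmxC; apply: W; rewrite // eq_sym.
move=> t3 ad t3' ad' neq; rewrite /fermat_family.
case: (ltngtP t t') le_tt' => // [lt_tt' _ | tt' _]; last subst t'.
  have : (t = 0 /\ t' = 1 \/ t = 0 /\ t' = 2 \/ t = 1 /\ t' = 2)%N by lia.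
  case=> [[-> ->] | [[-> ->] | [-> ->]]] /=.
  - apply: pairing_lines_disjoint_12 => //.
    by rewrite -!exprD expE; apply: H01.
  - apply: pairing_lines_disjoint_13.
    by rewrite mulNr mulrN eqr_opp -!exprD expE eq_sym; apply: H02.
  - apply: pairing_lines_disjoint_23.
    by rewrite -mulrA mulrNN -!exprD expE [(Q 2 _ + _)%N]addnC addnA; apply: H12.
have a_neq : a != a' by move: neq; rewrite xpair_eqE eqxx.
have [Pa Qa] := Pinj t a a' t3 ad ad' a_neq.
have : (t = 0 \/ t = 1 \/ t = 2)%N by lia.
by case=> [t0 | [t1 | t2]]; subst t; apply: pairing_lines_disjoint;
  rewrite // ?eqr_opp expE.
Qed.

Lemma disjoint_exponents_lines P Q : disjoint_exponents P Q ->
  exists Ls : 'I_(3 * d) -> 'M[K]_(2, 4), disjoint_fermat_lines d Ls.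
Proof.
move=> PQ; have d_gt0 := prim_order_gt0 theta_prim.
exists (fun i => fermat_family P Q (i %/ d) (i %% d)).
have div_lt3 (i : 'I_(3 * d)) : (i %/ d < 3)%N by rewrite ltn_divLR // mulnC.
split=> [i | i i' ii']; first exact: fermat_family_on_fermat.
apply: fermat_family_disjoint; rewrite ?ltn_mod //.
by apply: contra_neq ii' => -[qE rE]; apply: val_inj; rewrite /= (divn_eq i d) qE rE -divn_eq.
Qed.

End FermatFamilies.

Lemma prim_root_exists (K : numClosedFieldType) n : (0 < n)%N -> exists z : K, n.-primitive_root z.
Proof.
move=> n_gt0; have [r Xn1] := closed_field_poly_normal ('X^n - 1 : {poly K}).
rewrite (monicP (monicXnsubC 1 n_gt0)) scale1r in Xn1.
have r_roots : all n.-unity_root r by apply/allP=> z; rewrite -root_prod_XsubC -Xn1.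
have r_size : (n < (size r).+1)%N by rewrite -(size_prod_XsubC r id) -Xn1 size_XnsubC.
have [|z _] := hasP (has_prim_root n_gt0 r_roots _ r_size); last by exists z.
by rewrite -separable_prod_XsubC -Xn1 separable_Xn_sub_1 // pnatr_eq0 -lt0n.
Qed.

(** * Exponents of 3d disjoint lines *)

Section ExponentCombinatorics.
Local Close Scope ring_scope.

Lemma neq_modn_bounded (X Y d B : nat) : 0 < d -> X < Y + B * d -> Y < X + B * d ->
  (forall q, q < B -> X <> Y + q * d /\ Y <> X + q * d) -> X != Y %[mod d].
Proof.
move=> d0 h1 h2 H; apply/negP => /eqP E.
wlog le : X Y h1 h2 E H / Y <= X.
  move=> W; case: (leqP Y X) => [le|lt]; first by apply: (W X Y).
  apply: (W Y X) => //; last by rewrite ltnW.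
  by move=> q /H [] ? ?; split.
have /dvdnP [q Eq] : d %| X - Y by rewrite -eqn_mod_dvd // E.
have hq : q < B.
  by rewrite -(ltn_pmul2r d0) -Eq ltn_subLR // addnC.
by apply: (H q hq).1; rewrite -Eq addnC subnK.
Qed.

(* Closes the last hypothesis of [neq_modn_bounded] for B = 10, one quotient at a time. *)
Ltac quotient_cases := let q := fresh "q" in let hq := fresh "hq" in
  move=> q hq; do 10? (case: q hq => [|q] hq; first by split; lia); exfalso; lia.

(* Exchanging 2i and 2i + 1 keeps a - swap a in {-1, 0, 1} and, away from the fixed
   point, a + swap a in 4Z + 1; this separates the sums and differences of
   exponents that the disjointness conditions compare. *)
Definition swap_3mod4 (d a : nat) := if a == d.-1 then a else if odd a then a.-1 else a.+1.

Lemma swap_3mod4_cases d a : a < d ->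
  [\/ a = d.-1 /\ swap_3mod4 d a = a,
      a %% 2 = 1 /\ a < d.-1 /\ swap_3mod4 d a = a.-1 |
      a %% 2 = 0 /\ a < d.-1 /\ swap_3mod4 d a = a.+1].
Proof.
move=> ad; rewrite /swap_3mod4; case: eqP => [->|ne]; first by constructor 1.
have lt : a < d.-1 by lia.
case: (boolP (odd a)) => oa.
  by constructor 2; rewrite modn2 oa.
by constructor 3; rewrite modn2 (negbTE oa).
Qed.

Lemma swap_3mod4_bounds n a : a < 4 * n + 3 ->
  [/\ swap_3mod4 (4 * n + 3) a < 4 * n + 3, a <= swap_3mod4 (4 * n + 3) a + 1,
      swap_3mod4 (4 * n + 3) a <= a + 1 &
      exists i, i < 2 * n + 1 /\
        (a + swap_3mod4 (4 * n + 3) a = 4 * i + 1 \/ a + swap_3mod4 (4 * n + 3) a = 4 * i + 1 + (4 * n + 3))].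
Proof.
move=> ha; case: (swap_3mod4_cases ha) => [[-> ->]|[h1 [h2 ->]]|[h1 [h2 ->]]].
- split; try lia; exists n; split; lia.
- split; try lia; exists (a %/ 2); split; lia.
- split; try lia; exists (a %/ 2); split; lia.
Qed.

Lemma swap_3mod4_inj n a a' : a < 4 * n + 3 -> a' < 4 * n + 3 ->
  swap_3mod4 (4 * n + 3) a = swap_3mod4 (4 * n + 3) a' -> a = a'.
Proof.
move=> ha ha'; case: (swap_3mod4_cases ha) => [[h1 ->]|[h1 [h2 ->]]|[h1 [h2 ->]]];
case: (swap_3mod4_cases ha') => [[h1' ->]|[h1' [h2' ->]]|[h1' [h2' ->]]]; lia.
Qed.

Definition P_3mod4 n t a := if t == 0 then 4 * a else if t == 1 then a + 1 else 4 * a + 2 * n + 5.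
Definition Q_3mod4 n t a :=
  let s := (4 * n + 3).+1 - swap_3mod4 (4 * n + 3) a in
  if t == 0 then 4 * s else if t == 1 then s else 4 * s + 2 * n - 3.

Lemma disjoint_exponents_3mod4 n : 2 <= n -> disjoint_exponents (4 * n + 3) (P_3mod4 n) (Q_3mod4 n).
Proof.
move=> n2; have d0 : 0 < 4 * n + 3 by lia.
split.
- move=> t a a' ht ha ha' naa.
  have [r1 l1 u1 _] := swap_3mod4_bounds ha; have [r1' l1' u1' _] := swap_3mod4_bounds ha'.
  have hne : swap_3mod4 (4 * n + 3) a <> swap_3mod4 (4 * n + 3) a'.
    by move/(swap_3mod4_inj ha ha')=> E; rewrite E eqxx in naa.
  have : t = 0 \/ t = 1 \/ t = 2 by lia.
  case=> [->|[->|->]]; rewrite /P_3mod4 /Q_3mod4 /=; split;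
    apply: (neq_modn_bounded (B := 10)) => //; try lia; quotient_cases.
- move=> a c ha hc; have [r1 l1 u1 _] := swap_3mod4_bounds ha; have [r2 l2 u2 _] := swap_3mod4_bounds hc.
  rewrite /P_3mod4 /Q_3mod4 /=; apply: (neq_modn_bounded (B := 10)) => //; try lia; quotient_cases.
- move=> a f ha hf; have [r1 l1 u1 [i1 [hi1 E1]]] := swap_3mod4_bounds ha.
  have [r2 l2 u2 [i2 [hi2 E2]]] := swap_3mod4_bounds hf.
  rewrite /P_3mod4 /Q_3mod4 /=; apply: (neq_modn_bounded (B := 10)) => //; try lia; quotient_cases.
- move=> c f hc hf; have [r1 l1 u1 [i1 [hi1 E1]]] := swap_3mod4_bounds hc.
  have [r2 l2 u2 [i2 [hi2 E2]]] := swap_3mod4_bounds hf.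
  rewrite /P_3mod4 /Q_3mod4 /=; apply: (neq_modn_bounded (B := 10)) => //; try lia; quotient_cases.
Qed.

Definition swap_1mod4 (d a : nat) :=
  if a == d - 3 then d.-1 else if a == d - 2 then a else if a == d.-1 then d - 3
  else if odd a then a.-1 else a.+1.

Lemma swap_1mod4_cases d a : 3 < d -> a < d ->
  (a = d - 3 /\ swap_1mod4 d a = d.-1) \/ (a = d - 2 /\ swap_1mod4 d a = a) \/ (a = d.-1 /\ swap_1mod4 d a = d - 3) \/
      (a %% 2 = 1 /\ a < d - 3 /\ swap_1mod4 d a = a.-1) \/
      (a %% 2 = 0 /\ a < d - 3 /\ swap_1mod4 d a = a.+1).
Proof.
move=> d3 ad; rewrite /swap_1mod4.
case: eqP => [->|n1]; first by left.
case: eqP => [->|n2]; first by right; left.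
case: eqP => [->|n3]; first by right; right; left.
have lt : a < d - 3 by lia.
case: (boolP (odd a)) => oa.
  by right; right; right; left; rewrite modn2 oa.
by right; right; right; right; rewrite modn2 (negbTE oa).
Qed.

Lemma swap_1mod4_bounds n a : 1 <= n -> a < 4 * n + 1 ->
  [/\ swap_1mod4 (4 * n + 1) a < 4 * n + 1, a <= swap_1mod4 (4 * n + 1) a + 2,
      swap_1mod4 (4 * n + 1) a <= a + 2 &
      exists i, i < 2 * n - 1 /\
        (a + swap_1mod4 (4 * n + 1) a = 4 * i + 1 \/ a + swap_1mod4 (4 * n + 1) a = 4 * i + 1 + (4 * n + 1))].
Proof.
move=> n1 ha; have d3 : 3 < 4 * n + 1 by lia.
case: (swap_1mod4_cases d3 ha) => [[-> ->]|[[-> ->]|[[-> ->]|[[h1 [h2 ->]]|[h1 [h2 ->]]]]]].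
- split; try lia; exists (n - 1); split; lia.
- split; try lia; exists (n - 1); split; lia.
- split; try lia; exists (n - 1); split; lia.
- split; try lia; exists (a %/ 2); split; lia.
- split; try lia; exists (a %/ 2); split; lia.
Qed.

Lemma swap_1mod4_inj n a a' : 1 <= n -> a < 4 * n + 1 -> a' < 4 * n + 1 ->
  swap_1mod4 (4 * n + 1) a = swap_1mod4 (4 * n + 1) a' -> a = a'.
Proof.
move=> n1 ha ha'; have d3 : 3 < 4 * n + 1 by lia.
case: (swap_1mod4_cases d3 ha) => [[h1 ->]|[[h1 ->]|[[h1 ->]|[[h1 [h2 ->]]|[h1 [h2 ->]]]]]];
case: (swap_1mod4_cases d3 ha') => [[h1' ->]|[[h1' ->]|[[h1' ->]|[[h1' [h2' ->]]|[h1' [h2' ->]]]]]]; lia.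
Qed.

Definition P_1mod4 (n t a : nat) := if t == 0 then 4 * a else if t == 1 then a else 4 * a + 7.
Definition Q_1mod4 n t a :=
  let s := (4 * n + 1).+1 - swap_1mod4 (4 * n + 1) a in
  if t == 0 then 4 * s else if t == 1 then s + (4 * n + 1) - 8 else 4 * s + (4 * n + 1) - 1.

Lemma disjoint_exponents_1mod4 n : 6 <= n -> disjoint_exponents (4 * n + 1) (P_1mod4 n) (Q_1mod4 n).
Proof.
move=> n6; have n1 : 1 <= n by lia.
have d0 : 0 < 4 * n + 1 by lia.
split.
- move=> t a a' ht ha ha' naa.
  have [r1 l1 u1 _] := swap_1mod4_bounds n1 ha; have [r1' l1' u1' _] := swap_1mod4_bounds n1 ha'.
  have hne : swap_1mod4 (4 * n + 1) a <> swap_1mod4 (4 * n + 1) a'.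
    by move/(swap_1mod4_inj n1 ha ha')=> E; rewrite E eqxx in naa.
  have : t = 0 \/ t = 1 \/ t = 2 by lia.
  case=> [->|[->|->]]; rewrite /P_1mod4 /Q_1mod4 /=; split;
    apply: (neq_modn_bounded (B := 10)) => //; try lia; quotient_cases.
- move=> a c ha hc; have [r1 l1 u1 _] := swap_1mod4_bounds n1 ha; have [r2 l2 u2 _] := swap_1mod4_bounds n1 hc.
  rewrite /P_1mod4 /Q_1mod4 /=; apply: (neq_modn_bounded (B := 10)) => //; try lia; quotient_cases.
- move=> a f ha hf; have [r1 l1 u1 [i1 [hi1 E1]]] := swap_1mod4_bounds n1 ha.
  have [r2 l2 u2 [i2 [hi2 E2]]] := swap_1mod4_bounds n1 hf.
  rewrite /P_1mod4 /Q_1mod4 /=; apply: (neq_modn_bounded (B := 10)) => //; try lia; quotient_cases.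
- move=> c f hc hf; have [r1 l1 u1 [i1 [hi1 E1]]] := swap_1mod4_bounds n1 hc.
  have [r2 l2 u2 [i2 [hi2 E2]]] := swap_1mod4_bounds n1 hf.
  rewrite /P_1mod4 /Q_1mod4 /=; apply: (neq_modn_bounded (B := 10)) => //; try lia; quotient_cases.
Qed.

Definition disjoint_exponentsb d (P Q : nat -> nat -> nat) : bool :=
  [&& all (fun t => all (fun a => all (fun a' => (a == a') ||
          (P t a != P t a' %[mod d]) && (Q t a != Q t a' %[mod d])) (iota 0 d)) (iota 0 d)) (iota 0 3),
      all (fun a => all (fun c => P 0 a + Q 0 a != P 1 c + Q 1 c %[mod d]) (iota 0 d)) (iota 0 d),
      all (fun a => all (fun f => Q 0 a + P 2 f != Q 2 f + P 0 a %[mod d]) (iota 0 d)) (iota 0 d) &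
      all (fun c => all (fun f => P 1 c != Q 1 c + P 2 f + Q 2 f %[mod d]) (iota 0 d)) (iota 0 d)].

Lemma all_iota0 (d : nat) (p : nat -> bool) : all p (iota 0 d) -> forall a, a < d -> p a.
Proof. by move/allP => H a ha; apply: H; rewrite mem_iota. Qed.

Lemma disjoint_exponentsb_sound d P Q : disjoint_exponentsb d P Q -> disjoint_exponents d P Q.
Proof.
case/and4P => h1 h2 h3 h4; split.
- move=> t a a' ht ha ha' na.
  have := all_iota0 (all_iota0 (all_iota0 h1 ht) ha) ha'; rewrite (negbTE na) /=.
  by case/andP.
- by move=> a c ha hc; apply: (all_iota0 (all_iota0 h2 ha) hc).
- by move=> a c ha hc; apply: (all_iota0 (all_iota0 h3 ha) hc).
- by move=> a c ha hc; apply: (all_iota0 (all_iota0 h4 ha) hc).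
Qed.

(* Row t lists the second exponents of family t; the first exponent of line a is a. *)
Definition table7 : seq (seq nat) :=
  [:: [:: 0; 1; 5; 6; 4; 3; 2];
     [:: 5; 2; 3; 1; 6; 0; 4];
     [:: 4; 0; 6; 5; 3; 2; 1] ].

Definition table9 : seq (seq nat) :=
  [:: [:: 1; 2; 7; 8; 5; 6; 3; 4; 0];
     [:: 6; 4; 3; 2; 1; 0; 7; 8; 5];
     [:: 4; 3; 2; 6; 7; 8; 5; 0; 1] ].

Definition table13 : seq (seq nat) :=
  [:: [:: 4; 0; 12; 1; 2; 9; 11; 5; 6; 8; 7; 3; 10];
     [:: 0; 12; 11; 10; 9; 3; 4; 1; 2; 7; 8; 5; 6];
     [:: 9; 4; 5; 11; 12; 6; 8; 7; 2; 3; 10; 1; 0] ].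

Definition table17 : seq (seq nat) :=
  [:: [:: 11; 16; 14; 8; 12; 6; 4; 9; 3; 7; 1; 5; 10; 15; 2; 13; 0];
     [:: 8; 14; 13; 5; 11; 10; 2; 1; 7; 16; 15; 4; 3; 12; 6; 0; 9];
     [:: 13; 15; 1; 16; 10; 14; 5; 7; 12; 8; 6; 11; 4; 9; 0; 2; 3] ].

Definition table21 : seq (seq nat) :=
  [:: [:: 7; 8; 9; 10; 11; 4; 3; 6; 5; 0; 20; 2; 1; 17; 16; 19; 18; 13; 12; 15; 14];
     [:: 2; 3; 0; 1; 19; 20; 17; 18; 14; 15; 16; 12; 13; 10; 11; 8; 9; 6; 7; 4; 5];
     [:: 1; 17; 10; 14; 18; 13; 12; 5; 8; 20; 3; 19; 4; 16; 7; 15; 0; 9; 11; 6; 2] ].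

Definition P_table (t a : nat) := a.
Definition Q_table (tb : seq (seq nat)) (t a : nat) := nth 0 (nth [::] tb t) a.

Lemma disjoint_exponents_table7 : disjoint_exponents 7 P_table (Q_table table7).
Proof. by apply: disjoint_exponentsb_sound; vm_compute. Qed.
Lemma disjoint_exponents_table9 : disjoint_exponents 9 P_table (Q_table table9).
Proof. by apply: disjoint_exponentsb_sound; vm_compute. Qed.
Lemma disjoint_exponents_table13 : disjoint_exponents 13 P_table (Q_table table13).
Proof. by apply: disjoint_exponentsb_sound; vm_compute. Qed.
Lemma disjoint_exponents_table17 : disjoint_exponents 17 P_table (Q_table table17).
Proof. by apply: disjoint_exponentsb_sound; vm_compute. Qed.
Lemma disjoint_exponents_table21 : disjoint_exponents 21 P_table (Q_table table21).
Proof. by apply: disjoint_exponentsb_sound; vm_compute. Qed.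

Lemma disjoint_exponents_exist d : odd d -> 7 <= d -> exists P Q, disjoint_exponents d P Q.
Proof.
move=> hodd hd.
have [n [r [E hr]]] : exists n r, d = 4 * n + r /\ r < 4.
  by exists (d %/ 4), (d %% 4); split; [rewrite {1}(divn_eq d 4); lia | rewrite ltn_mod].
subst d.
have h2 : (4 * n + r) %% 2 = 1 by rewrite modn2 hodd.
have : r = 1 \/ r = 3 by lia.
case=> Er; subst r.
- case: (leqP 6 n) => hn; first by exists (P_1mod4 n), (Q_1mod4 n); apply: disjoint_exponents_1mod4.
  have : n = 2 \/ n = 3 \/ n = 4 \/ n = 5 by lia.
  case=> [->|[->|[->|->]]].
  + by exists P_table, (Q_table table9); exact: disjoint_exponents_table9.
  + by exists P_table, (Q_table table13); exact: disjoint_exponents_table13.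
  + by exists P_table, (Q_table table17); exact: disjoint_exponents_table17.
  + by exists P_table, (Q_table table21); exact: disjoint_exponents_table21.
- case: (leqP 2 n) => hn; first by exists (P_3mod4 n), (Q_3mod4 n); apply: disjoint_exponents_3mod4.
  have -> : n = 1 by lia.
  by exists P_table, (Q_table table7); exact: disjoint_exponents_table7.
Qed.

End ExponentCombinatorics.

Theorem corollary4p6 (R : realType) (d : nat) (hodd : odd d) (hd : (7 <= d)%N) :
  (exists Ls : 'I_(3 * d) -> 'M[R[i]]_(2, 4), disjoint_fermat_lines d Ls) /\
  (forall (n : nat) (Ls : 'I_n -> 'M[R[i]]_(2, 4)),
      disjoint_fermat_lines d Ls -> (n <= 3 * d)%N).
Proof.
split.
- have [theta theta_prim] := prim_root_exists (R[i]) (odd_gt0 hodd).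
  have [P [Q PQ]] := disjoint_exponents_exist hodd hd.
  exact: (disjoint_exponents_lines (K := R[i]) hodd theta_prim PQ).
- case: d hodd hd => [|[|[|m]]] // _ _ n Ls.
  exact: disjoint_fermat_lines_le.
Qed.
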